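(* Let $\mathcal{L}$ be a finite relational language, $K$ a Fraïssé class of finite $\mathcal{L}$-structures with the Strong Amalgamation Property, and $T$ the theory of its Fraïssé limit. If $T$ is geometric and satisfies $\mathrm{acl}(X)=X$ for every subset $X$ of every model of $T$, then $T_{pfc}$ is geometric and also satisfies $\mathrm{acl}(X)=X$ for every subset $X$ of every model of $T_{pfc}$.
   Context: A (possibly many-sorted) complete theory is geometric if it eliminates $\exists^\infty$ (for each formula $\varphi(x,y)$ with $x$ a single variable of some sort, there is $N$ such that each instance $\varphi(x,b)$ is infinite or has at most $N$ solutions) and acl satisfies exchange. $K$ has SAP if for all $A,B,C\in K$ and embeddings $e:A\to B$, $f:A\to C$ there are $D\in K$ and embeddings $g:B\to D$, $h:C\to D$ with $ge=hf$ and $\mathrm{im}(g)\cap\mathrm{im}(h)=\mathrm{im}(ge)$. If $\mathcal{L}=(R_i:i<k)$ with $R_i$ of arity $n_i$, $\mathcal{L}_{pfc}$ is the two-sorted language with sorts $O,P$ and relation symbols $R^i_x(x,y_1,\dots,y_{n_i})$, $x$ of sort $P$, $y_j$ of sort $O$. For an $\mathcal{L}_{pfc}$-structure $(A,B)$ and $b\in B$, $A_b$ is the $\mathcal{L}$-structure on $A$ with $R_i$ interpreted as $\{\bar y:R^i(b,\bar y)\}$. $K_{pfc}$ is the class of finite $\mathcal{L}_{pfc}$-structures $(A,B)$ with each $A_b$ isomorphic to a member of $K$; it is a SAP Fraïssé class, and $T_{pfc}$ is the theory of its Fraïssé limit. *)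

From Stdlib Require Import List Arith PeanoNat.
Import ListNotations.
Set Implicit Arguments.

Record signature := Signature {
  sort : Type;
  rel : Type;
  rsorts : rel -> list sort
}.

(* A many-sorted structure is presented as the disjoint union of its sorts:
   a carrier [dom] with a sort map [srt]. *)
Record structure (S : signature) := Structure {
  dom : Type;
  srt : dom -> sort S;
  interp : rel S -> list dom -> Prop
}.
Arguments dom {S} _.
Arguments srt {S} _ _.
Arguments interp {S} _ _ _.

Definition wellsorted {S} (M : structure S) : Prop :=
  forall r l, interp M r l -> map (srt M) l = rsorts S r.

Definition finite_type (T : Type) : Prop := exists l : list T, forall x, In x l.
Definition finite_set {T : Type} (P : T -> Prop) : Prop :=
  exists l : list T, forall x, P x -> In x l.
Definition at_most {T : Type} (n : nat) (P : T -> Prop) : Prop :=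
  exists l : list T, length l <= n /\ forall x, P x -> In x l.

Definition finite_str {S} (M : structure S) : Prop := finite_type (dom M).

Definition is_emb {S} (A B : structure S) (f : dom A -> dom B) : Prop :=
  (forall x y, f x = f y -> x = y) /\
  (forall a, srt B (f a) = srt A a) /\
  (forall r l, interp A r l <-> interp B r (map f l)).

Definition embeds {S} (A B : structure S) : Prop := exists f, is_emb A B f.

Definition str_class (S : signature) := structure S -> Prop.

Definition HP {S} (K : str_class S) : Prop :=
  forall A B, embeds A B -> K B -> K A.
Definition JEP {S} (K : str_class S) : Prop :=
  forall A B, K A -> K B -> exists C, K C /\ embeds A C /\ embeds B C.
Definition AP {S} (K : str_class S) : Prop :=
  forall (A B C : structure S) (e : dom A -> dom B) (f : dom A -> dom C),
    K A -> K B -> K C -> is_emb A B e -> is_emb A C f ->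
    exists (D : structure S) (g : dom B -> dom D) (h : dom C -> dom D),
      K D /\ is_emb B D g /\ is_emb C D h /\ (forall a, g (e a) = h (f a)).
Definition SAP {S} (K : str_class S) : Prop :=
  forall (A B C : structure S) (e : dom A -> dom B) (f : dom A -> dom C),
    K A -> K B -> K C -> is_emb A B e -> is_emb A C f ->
    exists (D : structure S) (g : dom B -> dom D) (h : dom C -> dom D),
      K D /\ is_emb B D g /\ is_emb C D h /\ (forall a, g (e a) = h (f a)) /\
      (forall d, (exists b, g b = d) -> (exists c, h c = d) ->
                 exists a, g (e a) = d).

(* Fraisse class of finite S-structures (closure under isomorphism is
   included in HP, since isomorphisms are embeddings; countably many
   isomorphism types is automatic for a finite relational language). *)
Definition fraisse_class {S} (K : str_class S) : Prop :=
  (exists A, K A) /\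
  (forall A, K A -> finite_str A /\ wellsorted A) /\
  HP K /\ JEP K /\ AP K.

Definition fraisse_limit {S} (K : str_class S) (M : structure S) : Prop :=
  wellsorted M /\
  (exists c : dom M -> nat, forall x y, c x = c y -> x = y) /\
  (forall A, K A <-> (finite_str A /\ wellsorted A /\ embeds A M)) /\
  (forall (A : structure S) (f g : dom A -> dom M),
     finite_str A -> is_emb A M f -> is_emb A M g ->
     exists h : dom M -> dom M,
       is_emb M M h /\ (forall y, exists x, h x = y) /\
       forall a, h (f a) = g a).

Inductive formula (S : signature) : Type :=
| FFalse : formula S
| FEq : nat -> nat -> formula S
| FRel : rel S -> list nat -> formula S
| FNot : formula S -> formula S
| FAnd : formula S -> formula S -> formula S
| FEx : sort S -> nat -> formula S -> formula S.
Arguments FFalse {S}. Arguments FEq {S} _ _. Arguments FRel {S} _ _. Arguments FNot {S} _. Arguments FAnd {S} _ _. Arguments FEx {S} _ _ _.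

Fixpoint fv {S} (phi : formula S) : list nat :=
  match phi with
  | FFalse => []
  | FEq i j => [i; j]
  | FRel _ l => l
  | FNot p => fv p
  | FAnd p q => fv p ++ fv q
  | FEx _ i p => filter (fun j => negb (Nat.eqb j i)) (fv p)
  end.

Definition closed {S} (phi : formula S) : Prop := fv phi = [].

Definition upd {T : Type} (v : nat -> T) (i : nat) (a : T) : nat -> T :=
  fun j => if Nat.eqb j i then a else v j.

Fixpoint sat {S} (M : structure S) (v : nat -> dom M) (phi : formula S) : Prop :=
  match phi with
  | FFalse => False
  | FEq i j => v i = v j
  | FRel r l => interp M r (map v l)
  | FNot p => ~ sat M v p
  | FAnd p q => sat M v p /\ sat M v q
  | FEx s i p => exists a, srt M a = s /\ sat M (upd v i a) p
  end.

Definition holds {S} (M : structure S) (phi : formula S) : Prop :=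
  forall v, sat M v phi.

(* N is a model of T = Th(M) (T is complete). *)
Definition model_of_Th {S} (M N : structure S) : Prop :=
  wellsorted N /\ inhabited (dom N) /\
  (forall phi, closed phi -> (holds M phi <-> holds N phi)).

Definition acl {S} (N : structure S) (X : dom N -> Prop) (a : dom N) : Prop :=
  exists (phi : formula S) (x : nat) (v : nat -> dom N),
    (forall j, In j (fv phi) -> j <> x -> X (v j)) /\
    sat N (upd v x a) phi /\
    finite_set (fun c => srt N c = srt N a /\ sat N (upd v x c) phi).

Definition elim_exists_infty {S} (M : structure S) : Prop :=
  forall (phi : formula S) (x : nat) (s : sort S),
  exists n : nat,
    forall N, model_of_Th M N -> forall v : nat -> dom N,
      let sol := fun c => srt N c = s /\ sat N (upd v x c) phi in
      ~ finite_set sol \/ at_most n sol.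

Definition acl_exchange {S} (M : structure S) : Prop :=
  forall N, model_of_Th M N ->
  forall (X : dom N -> Prop) (a b : dom N),
    acl N (fun y => X y \/ y = b) a -> ~ acl N X a ->
    acl N (fun y => X y \/ y = a) b.

Definition geometric {S} (M : structure S) : Prop :=
  elim_exists_infty M /\ acl_exchange M.

Definition trivial_acl {S} (M : structure S) : Prop :=
  forall N, model_of_Th M N ->
  forall (X : dom N -> Prop) (a : dom N), acl N X a -> X a.

(* ar = [n_0; ...; n_(k-1)], the arities of R_0, ..., R_(k-1) *)
Definition Lrel (ar : list nat) : Type := { i : nat | i < length ar }.

Definition Lsig (ar : list nat) : signature :=
  {| sort := unit; rel := Lrel ar;
     rsorts := fun r => repeat tt (nth (proj1_sig r) ar 0) |}.

Inductive pfc_sort : Type := SO | SP.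

(* R^i_x(x, y_1, ..., y_{n_i}) with x of sort P, y_j of sort O *)
Definition Lpfc (ar : list nat) : signature :=
  {| sort := pfc_sort; rel := Lrel ar;
     rsorts := fun r => SP :: repeat SO (nth (proj1_sig r) ar 0) |}.

(* A_b: the L-structure on the O-sort with R_i = { ybar : R^i(b, ybar) } *)
Definition fiber {ar} (N : structure (Lpfc ar)) (b : dom N) :
  structure (Lsig ar) :=
  @Structure (Lsig ar) { a : dom N | srt N a = SO }
     (fun _ => (tt : sort (Lsig ar)))
     (fun r l => interp N r (b :: map (@proj1_sig _ _) l)).

Definition K_pfc {ar} (K : str_class (Lsig ar)) : str_class (Lpfc ar) :=
  fun N => finite_str N /\ wellsorted N /\
           forall b : dom N, srt N b = SP -> exists A, K A /\
             exists f, is_emb (fiber N b) A f /\ (forall y, exists x, f x = y).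

(* acl is trivial in T_pfc because its Fraisse limit Mp has no algebraicity:
   for finitely many parameters ys and a point a outside them, some automorphism
   of Mp fixes ys and moves a off any given finite set.  This is expressed by
   first-order sentences, so it transfers to every model, and trivial acl makes
   T_pfc geometric at once.  By ultrahomogeneity, no algebraicity reduces to a
   twin property of K_pfc: every A in K_pfc embeds twice into some D in K_pfc,
   the two embeddings agreeing except at a chosen a0, whose second image is new.
   A twin of a point of sort P carries a copy of its fiber.  For a point of sort
   O one needs, in each fiber, a second realisation in M of the quantifier-free
   type of a0 over the rest of the fiber; it exists because acl is trivial in T
   and the language is finite, so that this type is a single formula. *)

From Stdlib Require Import List Arith Lia Classical ClassicalEpsilon
  FunctionalExtensionality ProofIrrelevance.
Import ListNotations.
Set Implicit Arguments.

Lemma upd_same {T} (v : nat -> T) i a : upd v i a i = a.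
Proof. unfold upd. now rewrite Nat.eqb_refl. Qed.

Lemma upd_other {T} (v : nat -> T) i a j : j <> i -> upd v i a j = v j.
Proof. intro H. unfold upd. now rewrite (proj2 (Nat.eqb_neq j i) H). Qed.

Lemma upd_upd_same {T} (v : nat -> T) i a b : upd (upd v i a) i b = upd v i b.
Proof.
  extensionality j. destruct (Nat.eq_dec j i) as [->|Hj].
  - now rewrite !upd_same.
  - now rewrite !upd_other.
Qed.

Lemma upd_id {T} (v : nat -> T) i : upd v i (v i) = v.
Proof.
  extensionality j. destruct (Nat.eq_dec j i) as [->|Hj].
  - now rewrite upd_same.
  - now rewrite upd_other.
Qed.

Lemma map_upd {T U} (h : T -> U) (v : nat -> T) i a :
  (fun j => h (upd v i a j)) = upd (fun j => h (v j)) i (h a).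
Proof. extensionality j. unfold upd. now destruct (Nat.eqb j i). Qed.

Section Satisfaction.
Variables (S : signature) (M : structure S).

Lemma sat_ext (p : formula S) : forall v w,
  (forall j, In j (fv p) -> v j = w j) -> (sat M v p <-> sat M w p).
Proof.
  induction p as [| i j | r l | p IH | p1 IH1 p2 IH2 | s i p IH];
    intros v w H; simpl in *.
  - tauto.
  - now rewrite (H i), (H j) by auto.
  - now rewrite (map_ext_in v w l) by auto.
  - now rewrite (IH v w H).
  - rewrite (IH1 v w), (IH2 v w) by (intros; apply H, in_or_app; auto). tauto.
  - assert (E : forall a, sat M (upd v i a) p <-> sat M (upd w i a) p).
    { intro a. apply IH. intros j Hj. destruct (Nat.eq_dec j i) as [->|Hji].
      - now rewrite !upd_same.
      - rewrite !upd_other by auto. apply H, filter_In.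
        now rewrite (proj2 (Nat.eqb_neq j i) Hji). }
    split; intros [a [Ha Hs]]; exists a; split; auto; apply E; auto.
Qed.

Definition automorphism (h : dom M -> dom M) : Prop :=
  is_emb M M h /\ forall y, exists x, h x = y.

Lemma sat_automorphism h : automorphism h ->
  forall p v, sat M v p <-> sat M (fun j => h (v j)) p.
Proof.
  intros [[Hinj [Hsrt Hrel]] Hsurj] p.
  induction p as [| i j | r l | p IH | p1 IH1 p2 IH2 | s i p IH]; intro v; simpl.
  - tauto.
  - split; [congruence | auto].
  - now rewrite Hrel, map_map.
  - now rewrite IH.
  - now rewrite IH1, IH2.
  - split.
    + intros [a [Ha Hs]]. exists (h a). rewrite Hsrt, <- map_upd. now rewrite <- IH.
    + intros [b [Hb Hs]]. destruct (Hsurj b) as [a <-]. exists a.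
      rewrite <- Hsrt, IH, map_upd. auto.
Qed.

Fixpoint exs (L : list (sort S * nat)) (p : formula S) : formula S :=
  match L with [] => p | (s, i) :: L' => FEx s i (exs L' p) end.

Lemma sat_exs v L p :
  (forall s i, In (s, i) L -> srt M (v i) = s) -> sat M v p -> sat M v (exs L p).
Proof.
  induction L as [|[s i] L IH]; intros Hs Hp; simpl; auto.
  exists (v i). rewrite upd_id. split; [apply Hs; now left|].
  apply IH; auto. intros s' j H. apply Hs. now right.
Qed.

Lemma exs_sat v L p : sat M v (exs L p) -> exists w, sat M w p.
Proof.
  revert v. induction L as [|[s i] L IH]; simpl; intros v H; eauto.
  destruct H as [a [_ H]]; eauto.
Qed.

Lemma fv_exs L p j : In j (fv (exs L p)) -> In j (fv p) /\ ~ In j (map snd L).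
Proof.
  induction L as [|[s i] L IH]; simpl; auto. intro H.
  apply filter_In in H as [H1 H2]. apply IH in H1 as [H1 H3]. split; auto.
  intros [->|H]; auto. now rewrite Nat.eqb_refl in H2.
Qed.

Definition bigAnd (l : list (formula S)) : formula S := fold_right FAnd (FNot FFalse) l.

Lemma sat_bigAnd v l : sat M v (bigAnd l) <-> Forall (sat M v) l.
Proof.
  induction l; simpl.
  - split; auto.
  - rewrite Forall_cons_iff, IHl. tauto.
Qed.

Lemma fv_bigAnd l j : In j (fv (bigAnd l)) -> exists f, In f l /\ In j (fv f).
Proof.
  induction l; simpl; [tauto|]. intro H. apply in_app_or in H as [H|H]; eauto.
  destruct (IHl H) as [f [? ?]]; eauto.
Qed.

Definition distinct_from (x : nat) (js : list nat) : formula S :=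
  bigAnd (map (fun j => FNot (FEq x j)) js).

Lemma sat_distinct_from v x js :
  sat M v (distinct_from x js) <-> forall j, In j js -> v x <> v j.
Proof. unfold distinct_from. now rewrite sat_bigAnd, Forall_map, Forall_forall. Qed.

Lemma fv_distinct_from x js i : In i (fv (distinct_from x js)) -> i = x \/ In i js.
Proof.
  intro H. apply fv_bigAnd in H as [f [Hf Hi]]. apply in_map_iff in Hf as [j [<- Hj]].
  simpl in Hi. destruct Hi as [<-|[<-|[]]]; auto.
Qed.

End Satisfaction.

Arguments automorphism {S} M h.
Arguments exs {S} L p.
Arguments bigAnd {S} l.
Arguments distinct_from {S} x js.

Definition no_algebraicity {S} (M : structure S) : Prop :=
  forall (ys : list (dom M)) (a : dom M) (l : list (dom M)), ~ In a ys ->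
    exists h, automorphism M h /\ (forall y, In y ys -> h y = y) /\ ~ In (h a) l.

Lemma closed_of_no_fv {S} (p : formula S) : (forall j, ~ In j (fv p)) -> closed p.
Proof.
  unfold closed. destruct (fv p) as [|j ?]; [reflexivity|]. intro H.
  exfalso. apply (H j). now left.
Qed.

Section NonAlgebraicitySentence.
Variables (S : signature) (s : sort S) (x : nat) (phi : formula S).

Definition solution_outside (zs : list nat) : formula S :=
  FEx s x (FAnd phi (distinct_from x zs)).

(* Written as a negated existential, it says: for all values of [P] and [zs],
   if [phi] has a solution of sort [s] distinct from the values of [P], then it
   has one distinct from the values of [zs]. *)
Definition nonalg_sentence (P : list (sort S * nat)) (zs : list nat) : formula S :=
  FNot (exs (P ++ map (pair s) zs)
    (FEx s x (FAnd (FAnd (distinct_from x (map snd P)) phi)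
                   (FNot (solution_outside zs))))).

Lemma nonalg_sentence_closed P zs :
  (forall j, In j (fv phi) -> j = x \/ In j (map snd P)) ->
  closed (nonalg_sentence P zs).
Proof.
  intro Hphi. apply closed_of_no_fv. intros j Hj. apply fv_exs in Hj as [Hj Hn].
  rewrite map_app, map_map, map_id in Hn. apply Hn, in_or_app.
  simpl in Hj. apply filter_In in Hj as [Hj Hjx].
  assert (Hjx' : j <> x) by (intros ->; now rewrite Nat.eqb_refl in Hjx).
  assert (Hfv : forall i, In i (fv phi) -> i <> x -> In i (map snd P) \/ In i zs)
    by (intros i Hi Hix; destruct (Hphi i Hi); tauto).
  repeat (apply in_app_or in Hj as [Hj|Hj]).
  - apply fv_distinct_from in Hj; tauto.
  - auto.
  - apply filter_In in Hj as [Hj _]. apply in_app_or in Hj as [Hj|Hj]; auto.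
    apply fv_distinct_from in Hj; tauto.
Qed.

Lemma no_algebraicity_nonalg_sentence (M : structure S) P zs :
  no_algebraicity M ->
  (forall j, In j (fv phi) -> j = x \/ In j (map snd P)) -> ~ In x zs ->
  holds M (nonalg_sentence P zs).
Proof.
  intros HN Hphi Hx w Hw. apply exs_sat in Hw as [W [c0 [Hc0 [[Hdist HA] HnB]]]].
  set (W0 := upd W x c0) in *. apply HnB.
  rewrite sat_distinct_from in Hdist. unfold W0 in Hdist. rewrite upd_same in Hdist.
  destruct (HN (map W0 (map snd P)) c0 (map W0 zs)) as [h [Hh [Hfix Hout]]].
  { intros Hin. apply in_map_iff in Hin as [j [Hj Hin]]. now apply (Hdist j). }
  exists (h c0). split; [destruct Hh as [[_ [Hsrt _]] _]; now rewrite Hsrt|]. split.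
  - apply (sat_automorphism Hh) in HA. revert HA. apply sat_ext.
    intros j Hj. destruct (Nat.eq_dec j x) as [->|Hjx].
    + rewrite upd_same. unfold W0. now rewrite upd_same.
    + rewrite upd_other by auto. symmetry. apply Hfix, in_map.
      destruct (Hphi j Hj); [contradiction|auto].
  - apply sat_distinct_from. intros z Hz. rewrite upd_same, upd_other.
    + intros E. apply Hout. rewrite E. now apply in_map.
    + intros ->. contradiction.
Qed.

Lemma nonalg_sentence_fails (N : structure S) v a (l : list (dom N)) J base :
  srt N a = s -> x < base -> (forall j, In j (fv phi) -> j < base) ->
  (forall j, In j J -> j < base) -> ~ In x J ->
  sat N (upd v x a) phi -> (forall j, In j J -> a <> v j) ->
  (forall c, srt N c = s -> sat N (upd v x c) phi -> In c l) ->
  ~ holds N (nonalg_sentence (map (fun j => (srt N (v j), j)) J) (seq base (length l))).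
Proof.
  intros Ha Hxb Hphib HJb HxJ Hsat Hdist Hfin Hholds.
  set (z k := let e := nth k l a in
              if excluded_middle_informative (srt N e = s) then e else a).
  set (v' j := if j <? base then v j else z (j - base)).
  assert (Hv' : forall j, j < base -> v' j = v j)
    by (intros j Hj; unfold v'; now rewrite (proj2 (Nat.ltb_lt j base) Hj)).
  assert (Hz : forall k, v' (base + k) = z k).
  { intro k. unfold v'. rewrite (proj2 (Nat.ltb_nlt _ _)) by lia. f_equal. lia. }
  assert (Hphi : forall c, sat N (upd v' x c) phi <-> sat N (upd v x c) phi).
  { intro c. apply sat_ext. intros j Hj. destruct (Nat.eq_dec j x) as [->|Hjx].
    - now rewrite !upd_same.
    - rewrite !upd_other by auto. auto. }
  apply (Hholds v'), sat_exs.
  { intros s' i Hi. apply in_app_or in Hi as [Hi|Hi];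
      apply in_map_iff in Hi as [j [E Hj]]; injection E as <- <-.
    - now rewrite Hv' by auto.
    - apply in_seq in Hj. replace j with (base + (j - base)) by lia. rewrite Hz.
      unfold z. now destruct excluded_middle_informative. }
  exists a. split; auto. split; [split|].
  - apply sat_distinct_from. rewrite map_map, map_id. intros j Hj.
    assert (Hjx : j <> x) by (intros ->; contradiction).
    rewrite upd_same, upd_other, Hv' by auto. auto.
  - now apply Hphi.
  - intros [c [Hc [Hcphi Hcout]]]. rewrite upd_upd_same in Hcphi, Hcout.
    apply Hphi, (Hfin c Hc) in Hcphi. apply In_nth with (d := a) in Hcphi as [k [Hk Hck]].
    rewrite sat_distinct_from, upd_same in Hcout. apply (Hcout (base + k)).
    + apply in_seq. lia.
    + rewrite upd_other, Hz by lia. unfold z. rewrite Hck.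
      now destruct excluded_middle_informative.
Qed.

End NonAlgebraicitySentence.

Lemma fresh_variable (l : list nat) x : exists base, x < base /\ forall j, In j l -> j < base.
Proof.
  exists (S (max x (list_max l))). split; [lia|]. intros j Hj.
  assert (H : list_max l <= list_max l) by lia. rewrite list_max_le, Forall_forall in H.
  specialize (H j Hj). lia.
Qed.

(* The non-algebraicity sentences hold in [Mp], hence in every model of its
   theory, where they rule out a finite solution set not meeting [X]. *)
Lemma trivial_acl_of_no_algebraicity {S} (Mp : structure S) :
  no_algebraicity Mp -> trivial_acl Mp.
Proof.
  intros HN N [_ [_ Hth]] X a [phi [x [v [Hpar [Hsat [l Hl]]]]]].
  apply NNPP. intro HXa.
  set (J := filter (fun j => negb (j =? x)) (fv phi)).
  assert (HJ : forall j, In j J <-> In j (fv phi) /\ j <> x).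
  { intro j. unfold J. rewrite filter_In, Bool.negb_true_iff, Nat.eqb_neq. tauto. }
  destruct (fresh_variable (fv phi) x) as [base [Hxb Hphib]].
  set (P := map (fun j => (srt N (v j), j)) J).
  assert (HP : forall j, In j (fv phi) -> j = x \/ In j (map snd P)).
  { intros j Hj. unfold P. rewrite map_map, map_id. destruct (Nat.eq_dec j x); auto.
    right. now apply HJ. }
  apply (@nonalg_sentence_fails S (srt N a) x phi N v a l J base); auto.
  - intros j Hj. apply Hphib, HJ, Hj.
  - intros Hx. now apply HJ in Hx.
  - intros j Hj E. apply HXa. rewrite E. apply HJ in Hj as [Hj Hjx]. now apply Hpar.
  - apply Hth.
    + apply nonalg_sentence_closed, HP.
    + apply no_algebraicity_nonalg_sentence; auto.
      intros Hx. apply in_seq in Hx. lia.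
Qed.

Lemma acl_self {S} (N : structure S) (X : dom N -> Prop) a : X a -> acl N X a.
Proof.
  intro H. exists (FEq 0 1), 0, (fun _ => a). split; [|split].
  - intros j [<-|[<-|[]]] Hj; [lia|auto].
  - simpl. unfold upd. reflexivity.
  - exists [a]. intros c [_ Hc]. simpl in Hc. unfold upd in Hc. simpl in Hc. now left.
Qed.

(* With trivial acl, a formula with finitely many solutions has them among its
   parameters, which bounds their number. *)
Lemma geometric_of_trivial_acl {S} (M : structure S) : trivial_acl M -> geometric M.
Proof.
  intro HT. split.
  - intros phi x s. exists (length (fv phi)). intros N HN v sol.
    destruct (classic (finite_set sol)) as [[l Hl]|Hf]; [right|now left].
    exists (map v (fv phi)). rewrite length_map. split; auto.
    intros c Hc.
    assert (Hacl : acl N (fun y => exists j, In j (fv phi) /\ y = v j) c).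
    { exists phi, x, v. split; [|split; [apply Hc|]].
      - intros j Hj _. eauto.
      - exists l. intros c' [Hc' Hs]. apply Hl. split; auto. destruct Hc; congruence. }
    apply (HT N HN) in Hacl as [j [Hj ->]]. now apply in_map.
  - intros N HN X a b Hab Hna. apply (HT N HN) in Hab as [Ha| ->].
    + exfalso. now apply Hna, acl_self.
    + apply acl_self. now right.
Qed.

Lemma emb_comp {S} (A B C : structure S) f g :
  is_emb A B f -> is_emb B C g -> is_emb A C (fun x => g (f x)).
Proof.
  intros [i1 [s1 r1]] [i2 [s2 r2]]. split; [|split].
  - auto.
  - intro a. now rewrite s2, s1.
  - intros r l. now rewrite r1, r2, map_map.
Qed.

Lemma emb_id {S} (A : structure S) : is_emb A A (fun x => x).
Proof. split; [|split]; auto. intros r l. now rewrite map_id. Qed.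

Lemma finite_sig (T : Type) (P : T -> Prop) (l : list T) :
  (forall x, P x -> In x l) -> finite_type {x | P x}.
Proof.
  intro H. exists (flat_map (fun x => match excluded_middle_informative (P x) with
     | left h => [exist P x h] | right _ => [] end) l).
  intros [x hx]. apply in_flat_map. exists x. split; auto.
  destruct excluded_middle_informative as [h|]; [|contradiction].
  left. f_equal. apply proof_irrelevance.
Qed.

Definition substructure {S} (M : structure S) (l : list (dom M)) : structure S :=
  @Structure S {y | In y l} (fun y => srt M (proj1_sig y))
    (fun r xs => interp M r (map (@proj1_sig _ _) xs)).

Lemma substructure_emb {S} (M : structure S) l : is_emb (substructure M l) M (@proj1_sig _ _).
Proof.
  split; [|split]; [|reflexivity|reflexivity].
  intros [x hx] [y hy] H. simpl in H. subst. f_equal. apply proof_irrelevance.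
Qed.

Lemma substructure_in_age {S} (K : str_class S) (M : structure S) l :
  fraisse_limit K M -> K (substructure M l).
Proof.
  intros [Hws [_ [Hage _]]]. apply Hage. split; [|split].
  - now apply (finite_sig (fun y => In y l) l).
  - intros r xs Hr. simpl in *. rewrite <- map_map. now apply Hws.
  - exists (@proj1_sig _ _). apply substructure_emb.
Qed.

Definition twin_property {S} (K : str_class S) : Prop :=
  forall A, K A -> forall a0 : dom A, exists (D : structure S) e1 e2,
    K D /\ is_emb A D e1 /\ is_emb A D e2 /\
    (forall t, t <> a0 -> e1 t = e2 t) /\ (forall t, e1 t <> e2 a0).

(* Realise a twin of [a] over [ys ++ l] inside the limit, then use
   ultrahomogeneity twice to move [a] onto it while fixing the rest. *)
Lemma no_algebraicity_of_twin_property {S} (K : str_class S) (M : structure S) :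
  fraisse_limit K M -> twin_property K -> no_algebraicity M.
Proof.
  intros HM Htwin ys a l Hna. pose proof HM as [_ [_ [Hage Hhom]]].
  set (A := substructure M (a :: ys ++ l)).
  set (a0 := exist (fun y => In y (a :: ys ++ l)) a (in_eq a _) : dom A).
  destruct (Htwin A (substructure_in_age _ HM) a0) as [D [e1 [e2 [KD [He1 [He2 [Hagree Hnew]]]]]]].
  apply Hage in KD as [FD [_ [G HG]]].
  assert (FA : finite_str A) by (apply (finite_sig (fun y => In y (a :: ys ++ l)) (a :: ys ++ l)); auto).
  destruct (Hhom A _ _ FA (emb_comp He1 HG) (substructure_emb _ _)) as [h0 [Hh0 [_ Hh0e]]].
  pose proof (emb_comp HG Hh0) as HGh0. simpl in HGh0.
  destruct (Hhom A _ _ FA (substructure_emb _ _) (emb_comp He2 HGh0)) as [h [Hh [Hhs Hhe]]].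
  exists h. split; [split; auto|split].
  - intros y Hy.
    set (t := exist (fun y => In y (a :: ys ++ l)) y (in_cons a y _ (in_or_app _ _ _ (or_introl Hy))) : dom A).
    change y with (proj1_sig t). rewrite Hhe, <- Hagree; [apply Hh0e|].
    intros E. apply Hna. apply (f_equal (@proj1_sig _ _)) in E. simpl in E. now subst.
  - intro Hin. change a with (proj1_sig a0) in Hin. rewrite Hhe in Hin.
    set (t := exist (fun y => In y (a :: ys ++ l)) _ (in_cons a _ _ (in_or_app _ _ _ (or_intror Hin))) : dom A).
    apply (Hnew t). destruct HGh0 as [Hinj _]. apply Hinj. now rewrite Hh0e.
Qed.

Fixpoint tuples (n : nat) (vs : list nat) : list (list nat) :=
  match n with
  | 0 => [[]]
  | S n => flat_map (fun j => map (cons j) (tuples n vs)) vs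
  end.

Lemma in_tuples n vs t : In t (tuples n vs) <-> length t = n /\ incl t vs.
Proof.
  revert t. induction n as [|n IH]; intro t; simpl.
  - split.
    + intros [<-|[]]. split; auto. intros x [].
    + intros [H _]. destruct t; [now left|discriminate].
  - rewrite in_flat_map. split.
    + intros [j [Hj Ht]]. apply in_map_iff in Ht as [t' [<- Ht']].
      apply IH in Ht' as [H1 H2]. split; simpl; auto. intros y [<-|Hy]; auto.
    + intros [H1 H2]. destruct t as [|j t]; [discriminate|]. exists j.
      split; [apply H2; now left|]. apply in_map, IH. split; [simpl in H1; lia|].
      intros y Hy. apply H2. now right.
Qed.

Lemma wellsorted_length {S} (M : structure S) r l :
  wellsorted M -> interp M r l -> length l = length (rsorts S r).
Proof. intros Hws Hr. apply Hws in Hr. now rewrite <- Hr, length_map. Qed.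

Definition subst_elt {T} (a c : T) (y : T) : T :=
  if excluded_middle_informative (y = a) then c else y.

Section QuantifierFreeTwins.
Variables (S : signature) (M : structure S) (rels : list (rel S)).
Hypothesis all_rels : forall r, In r rels.
Hypothesis M_wellsorted : wellsorted M.

Definition literal (w : nat -> dom M) r t : formula S :=
  if excluded_middle_informative (interp M r (map w t)) then FRel r t else FNot (FRel r t).

Definition qf_diagram (w : nat -> dom M) n : formula S :=
  bigAnd (flat_map (fun r => map (literal w r) (tuples (length (rsorts S r)) (seq 0 n))) rels).

Lemma sat_qf_diagram_self w n : sat M w (qf_diagram w n).
Proof.
  apply sat_bigAnd, Forall_forall. intros f Hf.
  apply in_flat_map in Hf as [r [_ Hf]]. apply in_map_iff in Hf as [t [<- _]].
  unfold literal. destruct excluded_middle_informative; simpl; auto.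
Qed.

Lemma sat_qf_diagram v w n : sat M v (qf_diagram w n) ->
  forall r js, incl js (seq 0 n) -> (interp M r (map v js) <-> interp M r (map w js)).
Proof.
  intros Hv r js Hjs.
  destruct (Nat.eq_dec (length js) (length (rsorts S r))) as [Hl|Hl].
  - apply sat_bigAnd in Hv. rewrite Forall_forall in Hv.
    assert (Hlit : sat M v (literal w r js)).
    { apply Hv, in_flat_map. exists r. split; auto. now apply in_map, in_tuples. }
    unfold literal in Hlit. destruct excluded_middle_informative; simpl in Hlit; tauto.
  - split; intro H; apply wellsorted_length in H; auto; rewrite length_map in H; contradiction.
Qed.

Lemma fv_qf_diagram w n j : In j (fv (qf_diagram w n)) -> j < n.
Proof.
  intro Hj. apply fv_bigAnd in Hj as [f [Hf Hj]].
  apply in_flat_map in Hf as [r [_ Hf]]. apply in_map_iff in Hf as [t [<- Ht]].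
  apply in_tuples in Ht as [_ Ht].
  assert (Hjt : In j t) by (unfold literal in Hj; destruct excluded_middle_informative; auto).
  apply Ht, in_seq in Hjt. lia.
Qed.

Hypothesis M_trivial_acl : trivial_acl M.

(* The diagram of [w] over the other points, with [w j0] free, is not
   algebraic because acl is trivial; so it has a solution other than [w j0]. *)
Lemma qf_twin_valuation (w : nat -> dom M) n j0 : j0 < n ->
  (forall i j, i < n -> j < n -> w i = w j -> i = j) ->
  exists c, srt M c = srt M (w j0) /\ (forall j, j < n -> c <> w j) /\
    forall r js, incl js (seq 0 n) ->
      (interp M r (map w js) <-> interp M r (map (upd w j0 c) js)).
Proof.
  intros Hj0 Hw.
  set (theta := FAnd (distinct_from j0 (remove Nat.eq_dec j0 (seq 0 n))) (qf_diagram w n)).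
  assert (Htheta : forall c, sat M (upd w j0 c) theta <->
    (forall j, j < n -> j <> j0 -> c <> w j) /\ sat M (upd w j0 c) (qf_diagram w n)).
  { intro c. simpl. rewrite sat_distinct_from, upd_same. split.
    - intros [H1 H2]. split; auto. intros j Hj Hjj0. rewrite <- (upd_other w c Hjj0).
      apply H1, in_in_remove; [auto|apply in_seq; lia].
    - intros [H1 H2]. split; auto. intros j Hj. apply in_remove in Hj as [Hj Hjj0].
      apply in_seq in Hj. rewrite upd_other by auto. apply H1; auto; lia. }
  assert (Hinf : ~ finite_set (fun c => srt M c = srt M (w j0) /\ sat M (upd w j0 c) theta)).
  { intro Hfin.
    assert (Hacl : acl M (fun m => exists j, j < n /\ j <> j0 /\ m = w j) (w j0)).
    { exists theta, j0, w. split; [|split; [|exact Hfin]].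
      - intros j Hj Hjj0. exists j. split; auto. simpl in Hj.
        apply in_app_or in Hj as [Hj|Hj].
        + apply fv_distinct_from in Hj as [|Hj]; [contradiction|].
          apply in_remove in Hj as [Hj _]. apply in_seq in Hj. lia.
        + now apply fv_qf_diagram in Hj.
      - apply Htheta. split; [|rewrite upd_id; apply sat_qf_diagram_self].
        intros j Hj Hjj0 E. apply Hjj0, Hw; auto. }
    assert (HMM : model_of_Th M M) by (split; [auto|split; [constructor; exact (w 0)|tauto]]).
    apply (M_trivial_acl HMM) in Hacl as [j [Hj [Hjj0 E]]]. apply Hjj0, Hw; auto. }
  destruct (not_all_not_ex _ (fun c => srt M c = srt M (w j0) /\
      sat M (upd w j0 c) theta /\ c <> w j0)) as [c [Hc [Hsat Hne]]].
  { intros Hnone. apply Hinf. exists [w j0]. intros c [Hc Hsat]. left.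
    apply NNPP. intro Hne. apply (Hnone c). auto. }
  apply Htheta in Hsat as [Hdist Hdiag]. exists c. split; [|split]; auto.
  - intros j Hj. destruct (Nat.eq_dec j j0) as [->|]; auto.
  - intros r js Hjs. symmetry. eapply sat_qf_diagram; eauto.
Qed.

Lemma incl_map_nth {T} (os ys : list T) d : incl ys os ->
  exists js, incl js (seq 0 (length os)) /\ ys = map (fun j => nth j os d) js.
Proof.
  induction ys as [|y ys IH]; intro H; [exists []; split; [intros ? []|auto]|].
  destruct IH as [js [Hjs ->]]; [intros z Hz; apply H; now right|].
  destruct (In_nth os y d) as [j [Hj <-]]; [apply H; now left|].
  exists (j :: js). split; auto. intros i [<-|Hi]; auto. apply in_seq. lia.
Qed.

Lemma qf_twin (bs : list (dom M)) a : In a bs ->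
  exists c, srt M c = srt M a /\ ~ In c bs /\
    forall r ys, incl ys bs -> (interp M r ys <-> interp M r (map (subst_elt a c) ys)).
Proof.
  intro Ha.
  set (os := nodup (fun x y : dom M => excluded_middle_informative (x = y)) bs).
  assert (Hos : forall y, In y os <-> In y bs) by (intro y; apply nodup_In).
  set (w j := nth j os a).
  destruct (In_nth os a a) as [j0 [Hj0 Hwj0]]; [now apply Hos|].
  assert (Hw : forall i j, i < length os -> j < length os -> w i = w j -> i = j)
    by (intros i j Hi Hj; apply NoDup_nth; auto; apply NoDup_nodup).
  destruct (qf_twin_valuation w Hj0 Hw) as [c [Hc [Hout Hrel]]].
  fold (w j0) in Hwj0. rewrite Hwj0 in Hc.
  exists c. split; [|split]; auto.
  - intro Hin. apply Hos, In_nth with (d := a) in Hin as [j [Hj E]]. now apply (Hout j).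
  - intros r ys Hys. destruct (incl_map_nth a (incl_tran Hys (fun y => proj2 (Hos y))))
      as [js [Hjs ->]].
    rewrite map_map. change (fun j => nth j os a) with w. rewrite (Hrel r js Hjs).
    erewrite map_ext_in; [reflexivity|].
    intros j Hj. apply Hjs, in_seq in Hj. unfold subst_elt.
    destruct excluded_middle_informative as [E|E].
    + assert (Ej : w j = w j0) by (rewrite Hwj0; exact E).
      apply Hw in Ej; [|lia|auto]. rewrite Ej. apply upd_same.
    + rewrite upd_other; auto. intros ->. contradiction.
Qed.

End QuantifierFreeTwins.

Definition nr {ar} (r : Lrel ar) : nat := nth (proj1_sig r) ar 0.

Definition allrels (ar : list nat) : list (Lrel ar) :=
  flat_map (fun i => match lt_dec i (length ar) with
                     | left h => [exist _ i h] | right _ => [] end) (seq 0 (length ar)).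

Lemma in_allrels ar (r : Lrel ar) : In r (allrels ar).
Proof.
  destruct r as [i h]. apply in_flat_map. exists i. split; [apply in_seq; lia|].
  destruct lt_dec as [h'|]; [|contradiction]. left. f_equal. apply proof_irrelevance.
Qed.

Lemma map_eq_repeat {T U} (f : T -> U) c l n :
  map f l = repeat c n -> Forall (fun x => f x = c) l /\ length l = n.
Proof.
  revert n. induction l as [|x l IH]; intros [|n] H; simpl in *; try discriminate; auto.
  injection H as H1 H. apply IH in H as [? ?]. auto.
Qed.

Lemma map_const_repeat {T U} {f : T -> U} {c l} :
  Forall (fun x => f x = c) l -> map f l = repeat c (length l).
Proof. induction 1; simpl; congruence. Qed.

Lemma Forall_sig {T} (P : T -> Prop) ts :
  Forall P ts -> exists sts : list {t | P t}, map (@proj1_sig _ _) sts = ts.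
Proof.
  induction 1 as [|x l Hx _ [sts IH]]; [now exists []|].
  exists (exist P x Hx :: sts). simpl. congruence.
Qed.

Section PfcStructures.
Variable ar : list nat.

Lemma interp_pfc (N : structure (Lpfc ar)) r l : wellsorted N -> interp N r l ->
  exists t0 ts, l = t0 :: ts /\ srt N t0 = SP /\ Forall (fun t => srt N t = SO) ts /\
    length ts = nr r.
Proof.
  intros Hws Hr. apply Hws in Hr. destruct l as [|t0 ts]; [discriminate|].
  injection Hr as H1 H2. apply map_eq_repeat in H2 as [? ?]. now exists t0, ts.
Qed.

Lemma fiber_wellsorted (N : structure (Lpfc ar)) b : wellsorted N -> wellsorted (fiber N b).
Proof.
  intros Hws r ls Hr. apply interp_pfc in Hr as [t0 [ts [E [_ [_ Hl]]]]]; auto.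
  injection E as _ E. change (map (fun _ => tt) ls = repeat tt (nr r)).
  rewrite (@map_const_repeat _ _ (fun _ => tt) tt ls); [|now apply Forall_forall].
  now rewrite <- Hl, <- E, length_map.
Qed.

Lemma fiber_finite (N : structure (Lpfc ar)) b : finite_str N -> finite_str (fiber N b).
Proof. intros [l Hl]. now apply (finite_sig (fun a => srt N a = SO) l). Qed.

Lemma K_pfc_intro (K : str_class (Lsig ar)) (N : structure (Lpfc ar)) :
  finite_str N -> wellsorted N -> (forall b, srt N b = SP -> K (fiber N b)) -> K_pfc K N.
Proof.
  intros HF Hws HK. split; [auto|split; [auto|]]. intros b Hb. exists (fiber N b).
  split; auto. exists (fun x => x). split; [apply emb_id|]. eauto.
Qed.

Lemma K_pfc_fiber (K : str_class (Lsig ar)) (N : structure (Lpfc ar)) b :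
  HP K -> K_pfc K N -> srt N b = SP -> K (fiber N b).
Proof.
  intros HHP [_ [_ HK]] Hb. destruct (HK b Hb) as [B [KB [f [Hf _]]]].
  apply (HHP _ B); auto. now exists f.
Qed.

End PfcStructures.

Section TwinStructure.
Variables (ar : list nat) (A : structure (Lpfc ar)) (a0 : dom A).

(* [A] with one new point [inr tt] of the sort of [a0]: [inl] embeds [A] as it
   is, [dup] embeds it with [a0] sent to the new point. *)
Definition twin_dom : Type := (dom A + unit)%type.

Definition collapse (d : twin_dom) : dom A := match d with inl t => t | inr _ => a0 end.

Definition dup (t : dom A) : twin_dom :=
  if excluded_middle_informative (t = a0) then inr tt else inl t.

Definition twin_str (I : Lrel ar -> list twin_dom -> Prop) : structure (Lpfc ar) :=
  @Structure (Lpfc ar) twin_dom (fun d => srt A (collapse d)) I.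

Lemma collapse_dup t : collapse (dup t) = t.
Proof. unfold dup. now destruct excluded_middle_informative. Qed.

Lemma twin_str_finite I : finite_str A -> finite_str (twin_str I).
Proof.
  intros [l Hl]. exists (inr tt :: map inl l).
  intros [t|[]]; [right; now apply in_map|now left].
Qed.

Lemma twin_str_emb I (e : dom A -> twin_dom) : (forall t, collapse (e t) = t) ->
  (forall r l, interp A r l <-> I r (map e l)) -> is_emb A (twin_str I) e.
Proof.
  intros He HI. split; [|split].
  - intros x y E. now rewrite <- (He x), <- (He y), E.
  - intro a. simpl. now rewrite He.
  - exact HI.
Qed.

Lemma twin_str_twins I :
  (forall r l, interp A r l <-> I r (map inl l)) ->
  (forall r l, interp A r l <-> I r (map dup l)) ->
  is_emb A (twin_str I) inl /\ is_emb A (twin_str I) dup /\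
  (forall t, t <> a0 -> inl t = dup t) /\ (forall t, inl t <> dup a0).
Proof.
  intros H1 H2. split; [|split; [|split]].
  - now apply twin_str_emb.
  - apply twin_str_emb; auto. apply collapse_dup.
  - intros t Ht. unfold dup. now destruct excluded_middle_informative.
  - intro t. unfold dup. now destruct excluded_middle_informative.
Qed.

Lemma collapse_inj_fiber x y : srt A a0 = SP ->
  srt A (collapse x) = SO -> collapse x = collapse y -> x = y.
Proof.
  intros Ha0 Hx E. destruct x as [x|[]], y as [y|[]]; simpl in *; subst; auto; congruence.
Qed.

(* Twin of a point of sort [P]: the new point gets the fiber of [a0]. *)
Lemma twin_P (K : str_class (Lsig ar)) : HP K -> K_pfc K A -> srt A a0 = SP ->
  exists I, K_pfc K (twin_str I) /\
    (forall r l, interp A r l <-> I r (map inl l)) /\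
    (forall r l, interp A r l <-> I r (map dup l)).
Proof.
  intros HHP KA Ha0. pose proof KA as [HF [Hws _]].
  exists (fun r l => interp A r (map collapse l)). split; [|split].
  - apply K_pfc_intro.
    + now apply twin_str_finite.
    + intros r l Hr. apply Hws in Hr. rewrite map_map in Hr. exact Hr.
    + intros d Hd. apply (HHP _ (fiber A (collapse d))); [|now apply K_pfc_fiber].
      exists (fun x => exist (fun t => srt A t = SO) (collapse (proj1_sig x)) (proj2_sig x)).
      split; [|split]; [|reflexivity|].
      * intros [x hx] [y hy] E. injection E as E.
        apply collapse_inj_fiber in E; auto. subst. f_equal. apply proof_irrelevance.
      * intros r ls. simpl. now rewrite !map_map.
  - intros r l. now rewrite map_map, map_id.
  - intros r l. rewrite map_map. erewrite map_ext; [now rewrite map_id|]. apply collapse_dup.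
Qed.

End TwinStructure.

Section TwinOfO.
Variables (ar : list nat) (K : str_class (Lsig ar)) (M : structure (Lsig ar)).
Hypothesis age_M : forall B, K B <-> finite_str B /\ wellsorted B /\ embeds B M.
Hypothesis M_wellsorted : wellsorted M.
Hypothesis M_trivial_acl : trivial_acl M.
Hypothesis K_HP : HP K.
Variables (A : structure (Lpfc ar)) (a0 : dom A).
Hypothesis A_pfc : K_pfc K A.
Hypothesis a0_O : srt A a0 = SO.

Lemma fiber_map p : srt A p = SP ->
  exists gt : dom A -> dom M,
    (forall x y, srt A x = SO -> srt A y = SO -> gt x = gt y -> x = y) /\
    forall r ts, Forall (fun t => srt A t = SO) ts ->
      (interp A r (p :: ts) <-> interp M r (map gt ts)).
Proof.
  intro Hp. pose proof (K_pfc_fiber p K_HP A_pfc Hp) as KF.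
  apply age_M in KF as [_ [_ [g [Hinj [_ Hrel]]]]].
  set (gt t := match excluded_middle_informative (srt A t = SO) with
               | left h => g (exist _ t h) | right _ => g (exist _ a0 a0_O) end).
  assert (Hgt : forall t (h : srt A t = SO), gt t = g (exist _ t h)).
  { intros t h. unfold gt. destruct excluded_middle_informative as [h'|]; [|contradiction].
    do 2 f_equal. apply proof_irrelevance. }
  exists gt. split.
  - intros x y Hx Hy E. rewrite (Hgt x Hx), (Hgt y Hy) in E. apply Hinj in E. now injection E.
  - intros r ts Hts. destruct (Forall_sig Hts) as [sts <-].
    transitivity (interp (fiber A p) r sts); [reflexivity|].
    rewrite Hrel, map_map. erewrite map_ext; [reflexivity|]. intros [t h]. symmetry. apply Hgt.
Qed.

Definition fiber_twin_map (p : dom A) (psi : twin_dom A -> dom M) : Prop :=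
  (forall x y, srt A (collapse a0 x) = SO -> srt A (collapse a0 y) = SO ->
     psi x = psi y -> x = y) /\
  forall r ts, Forall (fun t => srt A t = SO) ts ->
    (interp A r (p :: ts) <-> interp M r (map psi (map inl ts))) /\
    (interp A r (p :: ts) <-> interp M r (map psi (map (dup A a0) ts))).

(* The new point goes to a twin in [M] of the image of [a0], over the image of
   the whole fiber. *)
Lemma fiber_twin_map_exists p : srt A p = SP -> exists psi, fiber_twin_map p psi.
Proof.
  intro Hp. destruct (fiber_map p Hp) as [gt [Hinj Hrel]].
  destruct A_pfc as [[lA HlA] _].
  destruct (@qf_twin (Lsig ar) M (allrels ar) (@in_allrels ar) M_wellsorted M_trivial_acl (map gt lA) (gt a0))
    as [c [_ [Hc Htwin]]]; [apply in_map, HlA|].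
  assert (Himg : forall t, In (gt t) (map gt lA)) by (intro t; apply in_map, HlA).
  exists (fun d => match d with inl t => gt t | inr _ => c end). split.
  - intros [x|[]] [y|[]] Hx Hy E; simpl in *; auto.
    + f_equal. now apply Hinj.
    + exfalso. apply Hc. rewrite <- E. apply Himg.
    + exfalso. apply Hc. rewrite E. apply Himg.
  - intros r ts Hts. rewrite (Hrel r ts Hts), map_map. split; [tauto|].
    rewrite Forall_forall in Hts. rewrite (Htwin r (map gt ts)), !map_map.
    + erewrite map_ext_in; [reflexivity|]. intros t Ht. unfold dup, subst_elt.
      destruct (excluded_middle_informative (t = a0)) as [->|Hne];
        destruct excluded_middle_informative as [E|E]; auto; [contradiction|].
      exfalso. apply Hne, Hinj; auto.
    + intros y Hy. apply in_map_iff in Hy as [t [<- _]]. apply Himg.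
Qed.

Section Fiberwise.
Variable Fn : {p | srt A p = SP} -> twin_dom A -> dom M.
Hypothesis Fn_twin : forall P, fiber_twin_map (proj1_sig P) (Fn P).

Lemma Fn_irrelevant p q (Hp : srt A p = SP) (Hq : srt A q = SP) :
  p = q -> Fn (exist _ p Hp) = Fn (exist _ q Hq).
Proof. intros <-. do 2 f_equal. apply proof_irrelevance. Qed.

(* The fiber of each [P]-point [d] is the pullback of [M] along [Fn d]. *)
Definition fiberwise_interp (r : Lrel ar) (l : list (twin_dom A)) : Prop :=
  match l with
  | d0 :: ds => Forall (fun d => srt A (collapse a0 d) = SO) ds /\
      exists H : srt A (collapse a0 d0) = SP, interp M r (map (Fn (exist _ _ H)) ds)
  | [] => False
  end.

Lemma fiberwise_interp_emb (e : dom A -> twin_dom A) :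
  (forall t, collapse a0 (e t) = t) ->
  (forall P r ts, Forall (fun t => srt A t = SO) ts ->
     (interp A r (proj1_sig P :: ts) <-> interp M r (map (Fn P) (map e ts)))) ->
  forall r l, interp A r l <-> fiberwise_interp r (map e l).
Proof.
  intros He HFe r l. pose proof A_pfc as [_ [Hws _]]. split.
  - intro Hr. pose proof Hr as Hl.
    apply interp_pfc in Hl as [t0 [ts [-> [Ht0 [Hts _]]]]]; [split|exact Hws].
    + rewrite Forall_map. eapply Forall_impl; [|exact Hts]. intros t Ht. now rewrite He.
    + assert (H : srt A (collapse a0 (e t0)) = SP) by now rewrite He. exists H.
      rewrite (Fn_irrelevant H Ht0 (He t0)). now apply (HFe (exist _ t0 Ht0)).
  - destruct l as [|t0 ts]; [intros []|]. intros [Hts [H Hr]].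
    assert (Ht0 : srt A t0 = SP) by now rewrite <- (He t0).
    rewrite (Fn_irrelevant H Ht0 (He t0)) in Hr. apply (HFe (exist _ t0 Ht0)); auto.
    rewrite Forall_map in Hts. eapply Forall_impl; [|exact Hts]. intros t Ht. cbn beta in Ht. now rewrite He in Ht.
Qed.

Lemma fiberwise_wellsorted : wellsorted (twin_str a0 fiberwise_interp).
Proof.
  intros r [|d0 ds] Hr; [destruct Hr|]. destruct Hr as [Hds [H Hr]].
  apply wellsorted_length in Hr; auto. simpl in Hr. rewrite length_map, repeat_length in Hr.
  change (srt A (collapse a0 d0) :: map (fun d => srt A (collapse a0 d)) ds =
          SP :: repeat SO (nr r)).
  now rewrite H, (map_const_repeat Hds), Hr.
Qed.

Lemma fiberwise_K_pfc : K_pfc K (twin_str a0 fiberwise_interp).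
Proof.
  pose proof A_pfc as [HF _]. apply K_pfc_intro.
  - now apply twin_str_finite.
  - exact fiberwise_wellsorted.
  - intros d Hd. change (srt A (collapse a0 d) = SP) in Hd. apply age_M. split; [|split].
    + now apply fiber_finite, twin_str_finite.
    + apply fiber_wellsorted, fiberwise_wellsorted.
    + exists (fun x => Fn (exist _ _ Hd) (proj1_sig x)). split; [|split].
      * intros [x hx] [y hy] E. simpl in E.
        apply (proj1 (Fn_twin (exist _ _ Hd))) in E; [subst|exact hx|exact hy].
        f_equal. apply proof_irrelevance.
      * intros. now destruct (srt M _).
      * intros r ls. simpl. split.
        -- intros [_ [H Hr]]. rewrite map_map in Hr.
           now replace H with Hd in Hr by apply proof_irrelevance.
        -- intro Hr. split; [|exists Hd; now rewrite map_map].
           rewrite Forall_map. apply Forall_forall. intros [x hx] _. exact hx.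
Qed.

End Fiberwise.

(* Twin of a point of sort [O]: in each fiber the new point realises, in [M],
   the quantifier-free type of [a0] over the rest of the fiber. *)
Lemma twin_O : exists I, K_pfc K (twin_str a0 I) /\
    (forall r l, interp A r l <-> I r (map inl l)) /\
    (forall r l, interp A r l <-> I r (map (dup A a0) l)).
Proof.
  destruct (choice (fun (P : {p | srt A p = SP}) psi => fiber_twin_map (proj1_sig P) psi))
    as [Fn HFn]; [intros [p Hp]; now apply fiber_twin_map_exists|].
  exists (fiberwise_interp Fn). split; [|split].
  - now apply fiberwise_K_pfc.
  - apply fiberwise_interp_emb; auto. intros P r ts Hts. apply (proj2 (HFn P) r ts Hts).
  - apply fiberwise_interp_emb; auto; [apply collapse_dup|].
    intros P r ts Hts. apply (proj2 (HFn P) r ts Hts).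
Qed.

End TwinOfO.

Lemma twin_property_pfc ar (K : str_class (Lsig ar)) (M : structure (Lsig ar)) :
  HP K -> (forall B, K B <-> finite_str B /\ wellsorted B /\ embeds B M) ->
  wellsorted M -> trivial_acl M -> twin_property (K_pfc K).
Proof.
  intros HHP Hage HwM HT A KA a0.
  assert (HI : exists I, K_pfc K (twin_str a0 I) /\
    (forall r l, interp A r l <-> I r (map inl l)) /\
    (forall r l, interp A r l <-> I r (map (dup A a0) l))).
  { destruct (srt A a0) eqn:E; [eapply twin_O | eapply twin_P]; eauto. }
  destruct HI as [I [KI [H1 H2]]]. exists (twin_str a0 I), inl, (dup A a0).
  split; auto. now apply twin_str_twins.
Qed.

Theorem corollary4p8 (ar : list nat) (K : str_class (Lsig ar))
  (M : structure (Lsig ar)) :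
  fraisse_class K -> SAP K -> fraisse_limit K M ->
  geometric M -> trivial_acl M ->
  forall Mp : structure (Lpfc ar), fraisse_limit (K_pfc K) Mp ->
    geometric Mp /\ trivial_acl Mp.
Proof.
  intros [_ [_ [HHP _]]] _ [HwM [_ [Hage _]]] _ HT Mp HMp.
  assert (HTp : trivial_acl Mp).
  { apply trivial_acl_of_no_algebraicity, (no_algebraicity_of_twin_property HMp).
    now apply (twin_property_pfc HHP Hage). }
  split; [now apply geometric_of_trivial_acl|exact HTp].
Qed.
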